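(* Let $\Gamma$ be a finitely generated group. If there exists a finite generating set $X$ of $\Gamma$ and a generic subset $S\subset \mathbb F_X$ such that $\Gamma$ has solvable Equality Problem on $S\times S$, then $\Gamma$ has solvable Word Problem.
   Context: For a finite generating set $X$ of $\Gamma$, $\mathbb F_X$ is the free group on $X$ (elements are freely reduced words) and $\pi:\mathbb F_X\to\Gamma$ the canonical epimorphism. $|\omega|$ is the length of $\omega\in\mathbb F_X$, and $B_n=\{\omega\in\mathbb F_X:|\omega|\le n\}$. A set $S\subset\mathbb F_X$ is negligible if $\lim_{n\to\infty}|S\cap B_n|/|B_n|=0$, and generic if its complement is negligible. $\Gamma$ has solvable Word Problem on $S\subset\mathbb F_X$ if there is a partial algorithm that halts at least on every $\omega\in S$ and, whenever it halts on input $\omega$, correctly decides whether $\pi(\omega)$ is trivial; $\Gamma$ has solvable Word Problem if it has solvable Word Problem on $\mathbb F_X$. $\Gamma$ has solvable Equality Problem on $T\subset\mathbb F_X\times\mathbb F_X$ if there is a partial algorithm that halts at least on every $(\omega_1,\omega_2)\in T$ and, whenever it halts, correctly decides whether $\pi(\omega_1)=\pi(\omega_2)$. *)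

From HB Require Import structures.
From mathcomp Require Import all_boot all_order all_algebra.
Set Implicit Arguments. Unset Strict Implicit. Unset Printing Implicit Defensive.
Import Order.TTheory GRing.Theory Num.Theory.

Record group := Group {
  gcar :> Type;
  gmul : gcar -> gcar -> gcar;
  ginv : gcar -> gcar;
  gone : gcar;
  gmulA : associative gmul;
  gmul1 : left_id gone gmul;
  gmulV : left_inverse gone ginv gmul }.

(* Letters of the alphabet X u X^-1, X = {x_0,...,x_{k-1}}:
   (i, false) is x_i, (i, true) is x_i^-1. Words are seq (letter k).   *)
Definition letter (k : nat) : finType := ('I_k * bool)%type.

(* freely reduced words = elements of the free group F_X *)
Fixpoint reduced k (w : seq (letter k)) : bool :=
  match w with
  | x :: ((y :: _) as w') => (~~ ((x.1 == y.1) && (x.2 != y.2))) && reduced w'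
  | _ => true
  end.

Definition gen_val (G : group) k (gen : 'I_k -> G) (x : letter k) : G :=
  if x.2 then ginv (gen x.1) else gen x.1.
Definition piw (G : group) k (gen : 'I_k -> G) (w : seq (letter k)) : G :=
  foldr (fun x acc => gmul (gen_val gen x) acc) (gone G) w.

Definition generating (G : group) k (gen : 'I_k -> G) : Prop :=
  injective gen /\ forall g : G, exists w : seq (letter k), piw gen w = g.

Fixpoint words_of_len k (n : nat) : seq (seq (letter k)) :=
  match n with
  | 0 => [:: [::]]
  | n.+1 => [seq x :: w | x <- enum (letter k), w <- words_of_len k n]
  end.

Definition ball k (n : nat) : seq (seq (letter k)) :=
  [seq w <- flatten [seq words_of_len k j | j <- iota 0 n.+1] | reduced w].

Definition negligible k (S : pred (seq (letter k))) : Prop :=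
  forall eps : rat, (0 < eps)%R -> exists N : nat, forall n : nat, (N <= n)%N ->
    ((count S (ball k n))%:R / (size (ball k n))%:R < eps :> rat)%R.

Definition generic k (S : pred (seq (letter k))) : Prop :=
  negligible (predC S).

Inductive prog : Type :=
| PZero : prog
| PSucc : prog
| PProj : nat -> prog
| PComp : prog -> list prog -> prog
| PPrim : prog -> prog -> prog      (* primitive recursion on 1st arg *)
| PMu   : prog -> prog.             (* unbounded minimisation on 1st arg *)

Inductive peval : prog -> seq nat -> nat -> Prop :=
| ev_zero v : peval PZero v 0
| ev_succ x v : peval PSucc (x :: v) x.+1
| ev_proj i v : (i < size v)%N -> peval (PProj i) v (nth 0 v i)
| ev_comp f gs v ws y : pevals gs v ws -> peval f ws y -> peval (PComp f gs) v y
| ev_prim0 f g v y : peval f v y -> peval (PPrim f g) (0 :: v) y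
| ev_primS f g n v z y :
    peval (PPrim f g) (n :: v) z -> peval g (n :: z :: v) y ->
    peval (PPrim f g) (n.+1 :: v) y
| ev_mu f v n :
    peval f (n :: v) 0 ->
    (forall m, (m < n)%N -> exists y, y <> 0 /\ peval f (m :: v) y) ->
    peval (PMu f) v n
with pevals : list prog -> seq nat -> seq nat -> Prop :=
| evs_nil v : pevals nil v [::]
| evs_cons g gs v y ys : peval g v y -> pevals gs v ys -> pevals (g :: gs) v (y :: ys).

(* Encoding of words as natural numbers (bijective base 2k+1).          *)
Definition letter_code k (x : letter k) : nat := (2 * x.1 + x.2)%N.
Fixpoint word_code k (w : seq (letter k)) : nat :=
  match w with
  | [::] => 0
  | x :: w' => ((letter_code x).+1 + (2 * k).+1 * word_code w')%N
  end.

(* Output convention: 1 = "yes", 0 = "no". *)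

Definition WP_solvable_on (G : group) k (gen : 'I_k -> G)
    (S : pred (seq (letter k))) : Prop :=
  exists p : prog,
    (forall w, reduced w -> S w -> exists y, peval p [:: word_code w] y) /\
    (forall w y, reduced w -> peval p [:: word_code w] y ->
       (y = 1%N /\ piw gen w = gone G) \/ (y = 0%N /\ piw gen w <> gone G)).

Definition WP_solvable (G : group) k (gen : 'I_k -> G) : Prop :=
  WP_solvable_on gen predT.

Definition EqP_solvable_on (G : group) k (gen : 'I_k -> G)
    (T : seq (letter k) -> seq (letter k) -> bool) : Prop :=
  exists p : prog,
    (forall w1 w2, reduced w1 -> reduced w2 -> T w1 w2 ->
       exists y, peval p [:: word_code w1; word_code w2] y) /\
    (forall w1 w2 y, reduced w1 -> reduced w2 ->
       peval p [:: word_code w1; word_code w2] y ->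
       (y = 1%N /\ piw gen w1 = piw gen w2) \/ (y = 0%N /\ piw gen w1 <> piw gen w2)).

From mathcomp Require Import all_boot all_order all_algebra.
From mathcomp Require Import zify.
From Stdlib Require Import IndefiniteDescription.
Set Implicit Arguments. Unset Strict Implicit. Unset Printing Implicit Defensive.

(* Let p decide the Equality Problem on S x S for the generating set X, and write every
   letter x' of another finite generating set X' as a word tau x' over X. For a word w'
   over X' let w be the reduced form of tau w'. For every reduced u, pi u = pi (u w) iff
   pi w = 1, so whenever p halts on (u, u w) its answer solves the Word Problem for w'.
   Since u |-> u w injects the ball of radius N into the ball of radius N + |w|, which is
   at most (2k+1)^|w| times larger, genericity of S yields some u with both u and u w in
   S, so a dovetailed search over u and the running time of p terminates. *)

(** * Primitive recursive expressions *)

Inductive expr : Type :=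
| EVar of nat
| EZero
| ESucc of expr
| EIter of expr & expr & expr
| EComp of expr & seq expr.

Fixpoint eval (e : expr) (v : seq nat) : nat :=
  match e with
  | EVar j => nth 0 v j
  | EZero => 0
  | ESucc e => (eval e v).+1
  | EIter n x f => iteri (eval n v) (fun i z => eval f [:: i, z & v]) (eval x v)
  | EComp f args => eval f (map (fun a => eval a v) args)
  end.

Fixpoint compile (n : nat) (e : expr) : prog :=
  match e with
  | EVar j => if j < n then PProj j else PZero
  | EZero => PZero
  | ESucc e => PComp PSucc [:: compile n e]
  | EIter m x f =>
      PComp (PPrim (compile n x) (compile n.+2 f)) (compile n m :: map PProj (iota 0 n))
  | EComp f args => PComp (compile (size args) f) (map (compile n) args)
  end.

Section ExprInd.
Variable P : expr -> Prop.
Hypothesis Pvar : forall j, P (EVar j).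
Hypothesis Pzero : P EZero.
Hypothesis Psucc : forall e, P e -> P (ESucc e).
Hypothesis Piter : forall n x f, P n -> P x -> P f -> P (EIter n x f).
Hypothesis Pcomp : forall f args,
  P f -> foldr (fun a acc => P a /\ acc) True args -> P (EComp f args).

Fixpoint expr_ind_nested (e : expr) : P e :=
  match e with
  | EVar j => Pvar j
  | EZero => Pzero
  | ESucc e => Psucc (expr_ind_nested e)
  | EIter n x f => Piter (expr_ind_nested n) (expr_ind_nested x) (expr_ind_nested f)
  | EComp f args => Pcomp (expr_ind_nested f)
      ((fix all_args (l : seq expr) : foldr (fun a acc => P a /\ acc) True l :=
         if l is a :: l' then conj (expr_ind_nested a) (all_args l') else I) args)
  end.
End ExprInd.

Lemma pevals_proj v : pevals (map PProj (iota 0 (size v))) v v.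
Proof.
suff proj_from i m : i + m <= size v ->
    pevals (map PProj (iota i m)) v [seq nth 0 v j | j <- iota i m].
  by rewrite -[in X in pevals _ _ X](mkseq_nth 0 v); apply: proj_from.
elim: m i => [|m IHm] i le_im /=; first exact: evs_nil.
by apply: evs_cons; [apply: ev_proj; lia | apply: IHm; rewrite addSnnS].
Qed.

Lemma compile_correct e n v : size v = n -> peval (compile n e) v (eval e v).
Proof.
elim/expr_ind_nested: e n v.
- move=> j n v <- /=; case: ltnP => [j_lt | j_ge]; first exact: ev_proj.
  by rewrite nth_default //; apply: ev_zero.
- by move=> n v _; apply: ev_zero.
- move=> e IHe n v sz_v /=.
  by apply: ev_comp (ev_succ _ _); apply: evs_cons (evs_nil _); apply: IHe.
- move=> m x f IHm IHx IHf n v sz_v /=; apply: ev_comp.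
    by apply: evs_cons (IHm _ _ sz_v) _; rewrite -sz_v; apply: pevals_proj.
  elim: (eval m v) => [|i IHi] /=; first by apply: ev_prim0; apply: IHx.
  by apply: ev_primS IHi _; apply: IHf; rewrite /= sz_v.
- move=> f args IHf IHargs n v sz_v /=; apply: ev_comp; last first.
    by apply: IHf; rewrite size_map.
  elim: args IHargs {IHf} => [|a args IHl] /=; first by move=> _; apply: evs_nil.
  by case=> IHa /IHl; apply: evs_cons (IHa _ _ sz_v).
Qed.

Definition eadd a b := EComp (EIter (EVar 0) (EVar 1) (ESucc (EVar 1))) [:: a; b].
Definition epred a := EComp (EIter (EVar 0) EZero (EVar 0)) [:: a].
Definition esub a b := EComp (EIter (EVar 1) (EVar 0) (epred (EVar 1))) [:: a; b].
Definition emul a b := EComp (EIter (EVar 0) EZero (eadd (EVar 1) (EVar 3))) [:: a; b].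
Definition esgn a := EComp (EIter (EVar 0) EZero (ESucc EZero)) [:: a].
Definition eis0 a := EComp (EIter (EVar 0) (ESucc EZero) EZero) [:: a].
Definition eeqn a b := eis0 (eadd (esub a b) (esub b a)).
Definition eleq a b := eis0 (esub a b).
Definition eif c a b := eadd (emul (esgn c) a) (emul (eis0 c) b).
Fixpoint ecst (c : nat) : expr := if c is c'.+1 then ESucc (ecst c') else EZero.
Definition ediv a b :=
  EComp (EIter (EVar 0) EZero (eadd (EVar 1) (eleq (emul (ESucc (EVar 0)) (EVar 3)) (EVar 2))))
    [:: a; b].
Definition emod a b := esub a (emul b (ediv a b)).
Definition eexp a b := EComp (EIter (EVar 1) (ESucc EZero) (emul (EVar 1) (EVar 2))) [:: a; b].

Section EvalArith.
Implicit Types (v : seq nat) (a b c : expr).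

Lemma eval_comp v f args : eval (EComp f args) v = eval f [seq eval a v | a <- args].
Proof. by []. Qed.

Lemma eval_iter v n x f :
  eval (EIter n x f) v = iteri (eval n v) (fun i z => eval f [:: i, z & v]) (eval x v).
Proof. by []. Qed.

Lemma iteri_succ n x : iteri n (fun _ => succn) x = n + x.
Proof. by elim: n => //= n ->. Qed.

Lemma eval_add v a b : eval (eadd a b) v = eval a v + eval b v.
Proof. exact: iteri_succ. Qed.

Lemma eval_pred v a : eval (epred a) v = (eval a v).-1.
Proof. by rewrite /=; case: (eval a v). Qed.

Lemma eval_sub v a b : eval (esub a b) v = eval a v - eval b v.
Proof.
rewrite /=; elim: (eval b v) => [|n IHn] /=; first by rewrite subn0.
by rewrite IHn subnS; case: (_ - _).
Qed.

Lemma eval_mul v a b : eval (emul a b) v = eval a v * eval b v.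
Proof.
rewrite eval_comp eval_iter [eval (EVar 0) _]/=; elim: (eval a v) => [|n IHn] //.
by rewrite iteriS eval_add /= IHn mulSn addnC.
Qed.

Lemma eval_sgn v a : eval (esgn a) v = (eval a v != 0).
Proof. by rewrite /=; case: (eval a v). Qed.

Lemma eval_is0 v a : eval (eis0 a) v = (eval a v == 0).
Proof. by rewrite /=; case: (eval a v). Qed.

Lemma eval_eqn v a b : eval (eeqn a b) v = (eval a v == eval b v).
Proof. by rewrite eval_is0 eval_add !eval_sub; case: eqVneq => eq_ab; apply/eqP; lia. Qed.

Lemma eval_leq v a b : eval (eleq a b) v = (eval a v <= eval b v).
Proof. by rewrite eval_is0 eval_sub subn_eq0. Qed.

Lemma eval_if v c a b : eval (eif c a b) v = if eval c v != 0 then eval a v else eval b v.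
Proof. by rewrite eval_add !eval_mul eval_sgn eval_is0; case: eqP => _ /=; lia. Qed.

Lemma eval_cst v n : eval (ecst n) v = n.
Proof. by elim: n => //= n ->. Qed.

Lemma eval_div v a b : 0 < eval b v -> eval (ediv a b) v = eval a v %/ eval b v.
Proof.
move=> b_gt0; rewrite eval_comp eval_iter; set x := eval a v; set d := eval b v.
suff -> n : iteri n (fun i z => eval (eadd (EVar 1)
    (eleq (emul (ESucc (EVar 0)) (EVar 3)) (EVar 2))) [:: i, z, x & [:: d]]) 0
    = minn n (x %/ d) by rewrite (minn_idPr (leq_div _ _)).
elim: n => [|n IHn]; first by rewrite min0n.
rewrite iteriS eval_add eval_leq eval_mul /= IHn -leq_divRL //.
case: (leqP n.+1 (x %/ d)) => [lt_nq | ge_nq].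
  by rewrite (minn_idPl (ltnW lt_nq)) addn1.
by rewrite ltnS in ge_nq; rewrite (minn_idPr ge_nq) addn0.
Qed.

Lemma eval_mod v a b : 0 < eval b v -> eval (emod a b) v = eval a v %% eval b v.
Proof.
move=> b_gt0; rewrite eval_sub eval_mul eval_div // [X in _ - X]mulnC.
by rewrite {1}(divn_eq (eval a v) (eval b v)) addKn.
Qed.

Lemma eval_exp v a b : eval (eexp a b) v = eval a v ^ eval b v.
Proof.
rewrite eval_comp eval_iter [eval (EVar 1) _]/=; elim: (eval b v) => [|n IHn] //.
by rewrite iteriS eval_mul /= IHn expnSr.
Qed.
End EvalArith.

(** * Clocked evaluation *)

(* Search state of a clocked mu-operator: 0 while every value so far was defined and
   nonzero, 1 once some value was undefined within the clock, j.+2 once j was found. *)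
Definition mu_step (j s c : nat) : nat :=
  if s != 0 then s else if c == 0 then 1 else if c == 1 then j.+2 else 0.

Definition emu_step j s c :=
  eif s s (eif c (eif (eeqn c (ecst 1)) (ESucc (ESucc j)) EZero) (ecst 1)).

Lemma eval_mu_step v j s c :
  eval (emu_step j s c) v = mu_step (eval j v) (eval s v) (eval c v).
Proof. by rewrite /mu_step !eval_if eval_eqn eval_cst; case: (eval c v) => [|[]]. Qed.

(* [clocked t p v] is 0 if the evaluation of [p] on [v] does not finish with mu-searches
   bounded by [t], and [y.+1] if it returns [y]. *)
Fixpoint clocked (t : nat) (p : prog) (v : seq nat) {struct p} : nat :=
  match p with
  | PZero => 1
  | PSucc => if v is x :: _ then x.+2 else 0
  | PProj i => if i < size v then (nth 0 v i).+1 else 0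
  | PComp f gs => let cs := map (fun g => clocked t g v) gs in
      if all (fun c => c != 0) cs then clocked t f (map predn cs) else 0
  | PPrim f g => if v is x :: v' then
      iteri x (fun i z => if z is z'.+1 then clocked t g [:: i, z' & v'] else 0)
        (clocked t f v')
      else 0
  | PMu f => (iteri t (fun j s => mu_step j s (clocked t f (j :: v))) 0).-1
  end.

Section ProgInd.
Variable P : prog -> Prop.
Hypothesis Pzero : P PZero.
Hypothesis Psucc : P PSucc.
Hypothesis Pproj : forall i, P (PProj i).
Hypothesis Pcomp : forall f gs,
  P f -> foldr (fun g acc => P g /\ acc) True gs -> P (PComp f gs).
Hypothesis Pprim : forall f g, P f -> P g -> P (PPrim f g).
Hypothesis Pmu : forall f, P f -> P (PMu f).

Fixpoint prog_ind_nested (p : prog) : P p :=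
  match p with
  | PZero => Pzero
  | PSucc => Psucc
  | PProj i => Pproj i
  | PComp f gs => Pcomp (prog_ind_nested f)
      ((fix all_gs (l : seq prog) : foldr (fun g acc => P g /\ acc) True l :=
         if l is g :: l' then conj (prog_ind_nested g) (all_gs l') else I) gs)
  | PPrim f g => Pprim (prog_ind_nested f) (prog_ind_nested g)
  | PMu f => Pmu (prog_ind_nested f)
  end.
End ProgInd.

Definition eall_pos (cs : seq expr) : expr :=
  foldr (fun c acc => emul (esgn c) acc) (ecst 1) cs.

Lemma eval_all_pos v cs : eval (eall_pos cs) v = all (fun c => eval c v != 0) cs.
Proof.
elim: cs => [//|c cs IHcs].
rewrite [eall_pos _]/= -/(eall_pos cs) eval_mul eval_sgn IHcs /=.
by case: (_ != 0); rewrite ?mul1n ?mul0n.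
Qed.

Fixpoint clocked_expr (n : nat) (p : prog) {struct p} : expr :=
  match p with
  | PZero => ecst 1
  | PSucc => if n is _.+1 then ESucc (ESucc (EVar 1)) else EZero
  | PProj i => if i < n then ESucc (EVar i.+1) else EZero
  | PComp f gs => let cs := map (clocked_expr n) gs in
      emul (eall_pos cs) (EComp (clocked_expr (size gs) f) (EVar 0 :: map epred cs))
  | PPrim f g => if n is n'.+1 then
      EIter (EVar 1) (EComp (clocked_expr n' f) (EVar 0 :: map EVar (iota 2 n')))
        (emul (esgn (EVar 1)) (EComp (clocked_expr n.+1 g)
           [:: EVar 2, EVar 0, epred (EVar 1) & map EVar (iota 4 n')]))
      else EZero
  | PMu f => epred (EIter (EVar 0) EZero (emu_step (EVar 0) (EVar 1)
      (EComp (clocked_expr n.+1 f) [:: EVar 2, EVar 0 & map EVar (iota 3 n)])))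
  end.

Lemma eval_shifted_vars (l w : seq nat) :
  [seq eval a (l ++ w) | a <- map EVar (iota (size l) (size w))] = w.
Proof.
rewrite -map_comp; elim: w l => [//|x w IHw] l /=.
rewrite nth_cat ltnn subnn /=; congr (_ :: _).
by rewrite -cat_rcons -[in RHS](IHw (rcons l x)) size_rcons.
Qed.

Lemma eval_clocked_expr p n t v :
  size v = n -> eval (clocked_expr n p) (t :: v) = clocked t p v.
Proof.
elim/prog_ind_nested: p n t v.
- by [].
- by move=> [|n] t [|x v].
- by move=> i n t v <- /=; case: ifP.
- move=> f gs IHf IHgs n t v sz_v.
  have eval_gs : [seq eval c (t :: v) | c <- map (clocked_expr n) gs] =
      [seq clocked t g v | g <- gs].
    rewrite -map_comp; elim: gs IHgs {IHf} => [//|g gs IHl] /= [IHg /IHl ->].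
    by rewrite IHg.
  have all_gs : all (fun c => eval c (t :: v) != 0) (map (clocked_expr n) gs) =
      all (fun c => c != 0) [seq clocked t g v | g <- gs].
    by rewrite -eval_gs !all_map.
  rewrite [clocked_expr _ _]/= eval_mul eval_all_pos all_gs /=.
  case: ifP => _; last by rewrite mul0n.
  have -> : [seq eval a (t :: v) | a <- map epred (map (clocked_expr n) gs)] =
      [seq c.-1 | c <- [seq clocked t g v | g <- gs]].
    by rewrite -eval_gs -!map_comp; apply: eq_map => c; apply: eval_pred.
  by rewrite mul1n IHf // !size_map.
- move=> f g IHf IHg [|n] t [|x v] // [sz_v].
  rewrite [clocked_expr _ _]/= eval_iter eval_comp map_cons -sz_v.
  rewrite (eval_shifted_vars [:: t; x] v) IHf //; apply: eq_iteri => i z.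
  rewrite eval_mul eval_sgn eval_comp; case: z => [//|z].
  by rewrite !map_cons (eval_shifted_vars [:: i; z.+1; t; x] v) mul1n IHg //=.
- move=> f IHf n t v sz_v.
  rewrite [clocked_expr _ _]/= eval_pred eval_iter; congr predn.
  apply: eq_iteri => j s; rewrite eval_mu_step eval_comp !map_cons -sz_v.
  by rewrite (eval_shifted_vars [:: j; s; t] v) IHf.
Qed.

Section MuSearch.
Variable c : nat -> nat.

Definition mu_search (T : nat) : nat := iteri T (fun j s => mu_step j s (c j)) 0.

Lemma mu_search0 T : mu_search T = 0 <-> (forall j, j < T -> 2 <= c j).
Proof.
elim: T => [|T IHT]; first by split => // _ j.
rewrite /mu_search iteriS -/(mu_search T) /mu_step.
case: (mu_search T) IHT => [|s] [IH1 IH2] /=.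
  split => [c_T j | c_ge2].
    by rewrite ltnS leq_eqVlt => /predU1P [->|/(IH1 erefl)//]; case: (c T) c_T => [|[]].
  by have := c_ge2 T (ltnSn T); case: (c T) => [|[]].
split => // c_ge2.
by have := IH2 (fun j lt_jT => c_ge2 j (ltnW lt_jT)).
Qed.

Lemma mu_searchS T m :
  mu_search T = m.+2 <-> [/\ m < T, c m = 1 & forall j, j < m -> 2 <= c j].
Proof.
elim: T => [|T IHT]; first by split => // [[]].
rewrite /mu_search iteriS -/(mu_search T) /mu_step.
case sT: (mu_search T) IHT => [|s] IHT /=.
  have c_ge2 := proj1 (mu_search0 T) sT; split.
    by case cT: (c T) => [|[|x]] // -[<-].
  case=> lt_mT c_m c_lt; have eq_mT : m = T.
    apply/eqP; rewrite eqn_leq -ltnS lt_mT leqNgt; apply/negP => /c_ge2.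
    by rewrite c_m.
  by rewrite -eq_mT c_m.
split.
  by move=> /IHT [lt_mT c_m c_lt]; split => //; apply: ltnW.
case; rewrite ltnS leq_eqVlt => /predU1P [-> c_T c_lt | lt_mT c_m c_lt].
  by move: sT; rewrite (proj2 (mu_search0 T) c_lt).
by rewrite -(proj2 IHT).
Qed.
End MuSearch.

Lemma clocked_mu t f v : clocked t (PMu f) v = (mu_search (fun j => clocked t f (j :: v)) t).-1.
Proof. by []. Qed.

Lemma clocked_mono p t t' v y : t <= t' -> clocked t p v = y.+1 -> clocked t' p v = y.+1.
Proof.
move=> le_tt'; elim/prog_ind_nested: p v y => //.
- move=> f gs IHf IHgs v y /=.
  have map_gs : all (fun c => c != 0) [seq clocked t g v | g <- gs] ->
      [seq clocked t' g v | g <- gs] = [seq clocked t g v | g <- gs].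
    elim: gs IHgs {IHf} => [//|g gs IHl] /= [IHg /IHl IHgs] /andP [+ /IHgs ->].
    by case Eg: (clocked t g v) => [//|z] _; rewrite (IHg _ _ Eg).
  by case: ifP => // all_gs /IHf; rewrite map_gs // all_gs.
- move=> f g IHf IHg [//|x v] y /=.
  elim: x y => [|x IHx] y /=; first exact: IHf.
  by case Ex: (iteri _ _ _) => [//|z] /IHg; rewrite (IHx _ Ex).
- move=> f IHf v y; rewrite !clocked_mu.
  case sT: (mu_search _ t) => [//|[//|m]] /= [<-] {y}.
  have [lt_mt f_m f_lt] := proj1 (mu_searchS _ _ _) sT.
  suff -> : mu_search (fun j => clocked t' f (j :: v)) t' = m.+2 by [].
  apply/mu_searchS; split; [exact: leq_trans le_tt' | exact: IHf | ].
  by move=> j /f_lt; case fj: (clocked t f (j :: v)) => [//|z]; rewrite (IHf _ _ fj).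
Qed.

Lemma clocked_sound p t v y : clocked t p v = y.+1 -> peval p v y.
Proof.
elim/prog_ind_nested: p v y.
- by move=> v y [<-]; apply: ev_zero.
- by move=> [//|x v] y [<-]; apply: ev_succ.
- by move=> i v y /=; case: ifP => // lt_iv [<-]; apply: ev_proj.
- move=> f gs IHf IHgs v y /=; case: ifP => // all_gs /IHf; apply: ev_comp.
  elim: gs IHgs all_gs {IHf} => [_ _|g gs IHl [IHg /IHl IHgs]]; first exact: evs_nil.
  move=> /= /andP [+ /IHgs]; case Eg: (clocked t g v) => [//|z] _.
  exact: evs_cons (IHg _ _ Eg).
- move=> f g IHf IHg [//|x v] y /=.
  elim: x y => [|x IHx] y /=; first by move/IHf; apply: ev_prim0.
  by case Ex: (iteri _ _ _) => [//|z] /IHg; apply: ev_primS (IHx _ Ex).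
- move=> f IHf v y; rewrite clocked_mu.
  case sT: (mu_search _ t) => [//|[//|m]] /= [<-] {y}.
  have [_ f_m f_lt] := proj1 (mu_searchS _ _ _) sT.
  apply: ev_mu (IHf _ _ f_m) _ => j /f_lt.
  case fj: (clocked t f (j :: v)) => [//|[//|z]] _.
  by exists z.+1; split => //; apply: IHf fj.
Qed.

Lemma ex_uniform_bound (P : nat -> nat -> Prop) n :
  (forall m t t', t <= t' -> P m t -> P m t') ->
  (forall m, m < n -> exists t, P m t) -> exists T, forall m, m < n -> P m T.
Proof.
move=> P_mono; elim: n => [|n IHn] exP; first by exists 0.
have [T1 PT1] := IHn (fun m lt_mn => exP m (ltnW lt_mn)).
have [t2 Pt2] := exP n (ltnSn n).
exists (maxn T1 t2) => m; rewrite ltnS leq_eqVlt => /predU1P [->|lt_mn].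
  exact: P_mono (leq_maxr _ _) Pt2.
exact: P_mono (leq_maxl _ _) (PT1 m lt_mn).
Qed.

Lemma map_clocked_mono gs v t t' ws : t <= t' ->
  [seq clocked t g v | g <- gs] = map succn ws ->
  [seq clocked t' g v | g <- gs] = map succn ws.
Proof.
move=> le_tt'; elim: gs ws => [|g gs IHgs] [|w ws] //= [Eg /IHgs ->].
by rewrite (clocked_mono le_tt' Eg).
Qed.

(* The premises of [ev_mu] hide derivations under binders, so no induction scheme reaches
   them; hence the explicit structural fixpoint. *)
Lemma clocked_complete : forall p v y, peval p v y -> exists t, clocked t p v = y.+1.
Proof.
fix IH 4; move=> p v y [].
- by exists 0.
- by exists 0.
- by move=> i v' lt_iv; exists 0; rewrite /= lt_iv.
- move=> f gs v' ws y' ev_gs /IH [t2 E2].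
  have [t1 E1] : exists t, [seq clocked t g v' | g <- gs] = map succn ws.
    elim: ev_gs {E2} => {gs v' ws} [v'|g gs v' w ws /IH [tg Eg] _ [tgs Egs]].
      by exists 0.
    exists (maxn tg tgs) => /=; rewrite (clocked_mono (leq_maxl tg tgs) Eg).
    by rewrite (map_clocked_mono (leq_maxr tg tgs) Egs).
  exists (maxn t1 t2) => /=; rewrite (map_clocked_mono (leq_maxl t1 t2) E1).
  have -> : all (fun c => c != 0) (map succn ws) by elim: (ws).
  by rewrite -map_comp map_id; apply: clocked_mono (leq_maxr t1 t2) E2.
- by move=> f g v' y' /IH [t E]; exists t.
- move=> f g n v' z y' /IH [t1 E1] /IH [t2 E2].
  exists (maxn t1 t2) => /=; move: (clocked_mono (leq_maxl t1 t2) E1) => /= ->.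
  exact: clocked_mono (leq_maxr t1 t2) E2.
- move=> f v' n /IH [t0 E0] ev_lt.
  have [T1 ET1] : exists T, forall m, m < n ->
      exists y, y <> 0 /\ clocked T f (m :: v') = y.+1.
    apply: ex_uniform_bound => [m t t' le_tt' [y' [y'_neq0 Ey']] | m /ev_lt [y' [y'_neq0]]].
      by exists y'; split => //; apply: clocked_mono le_tt' Ey'.
    by case/IH=> t Et; exists t, y'.
  set T := maxn (maxn t0 T1) n.+1.
  exists T; rewrite clocked_mu.
  suff -> : mu_search (fun j => clocked T f (j :: v')) T = n.+2 by [].
  apply/mu_searchS; split; first by rewrite leq_max leqnn orbT.
    by apply: clocked_mono E0; rewrite !leq_max leqnn.
  move=> j /ET1 [y' [y'_neq0 Ey']].
  by rewrite (clocked_mono _ Ey') ?leq_max ?leqnn ?orbT //; case: y' y'_neq0 {Ey'}.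
Qed.

Lemma peval_fun p v y1 y2 : peval p v y1 -> peval p v y2 -> y1 = y2.
Proof.
move=> /clocked_complete [t1 E1] /clocked_complete [t2 E2].
have := clocked_mono (leq_maxl t1 t2) E1.
by rewrite (clocked_mono (leq_maxr t1 t2) E2) => -[].
Qed.

(** * Free reduction *)

Section GroupFacts.
Variable G : group.
Implicit Types a b : G.

Lemma gmulrV a : gmul a (ginv a) = gone G.
Proof. by rewrite -[LHS]gmul1 -(gmulV (ginv a)) -gmulA (gmulA (ginv a)) gmulV gmul1. Qed.

Lemma gmulr1 a : gmul a (gone G) = a.
Proof. by rewrite -(gmulV a) gmulA gmulrV gmul1. Qed.

Lemma gmul_fixr a b : gmul a b = a -> b = gone G.
Proof. by move/(congr1 (gmul (ginv a))); rewrite gmulA gmulV gmul1. Qed.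
End GroupFacts.

Section FreeReduction.
Variable k : nat.
Local Notation word := (seq (letter k)).
Implicit Types (x : letter k) (u w : word).

Definition linv x : letter k := (x.1, ~~ x.2).

Lemma linvK : involutive linv.
Proof. by case=> i b; rewrite /linv negbK. Qed.

Definition cons_red x w : word :=
  if w is y :: w' then (if y == linv x then w' else x :: w) else [:: x].

(* The reduced form of [u ++ w] when [w] is reduced. *)
Definition mul_red u w : word := foldr cons_red w u.

Definition winv w : word := rev (map linv w).

Lemma reduced_cons x w :
  reduced (x :: w) = (if w is y :: _ then y != linv x else true) && reduced w.
Proof.
case: w => [|y w] //=; congr andb.
case: x y => [i b] [j c]; rewrite /linv /= xpair_eqE.
by case: b; case: c; rewrite ?andbT ?andbF // eq_sym.
Qed.

Lemma reduced_behead x w : reduced (x :: w) -> reduced w.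
Proof. by rewrite reduced_cons => /andP []. Qed.

Lemma reduced_cons_red x w : reduced w -> reduced (cons_red x w).
Proof.
case: w => [//|y w] red_w /=; case: eqP => [_|/eqP neq_y].
  exact: reduced_behead red_w.
by rewrite reduced_cons red_w neq_y.
Qed.

Lemma reduced_mul_red u w : reduced w -> reduced (mul_red u w).
Proof. by move=> red_w; elim: u => //= x u; apply: reduced_cons_red. Qed.

Lemma cons_redK x w : reduced w -> cons_red x (cons_red (linv x) w) = w.
Proof.
case: w => [|y w] red_w; first by rewrite /= eqxx.
rewrite [cons_red (linv x) _]/= linvK; case: eqP => [<-|_]; last by rewrite /= eqxx.
by case: w red_w => [//|z w]; rewrite reduced_cons => /andP [/negbTE /= ->].
Qed.

Lemma mul_red_cons_red x u w :
  reduced u -> reduced w -> mul_red (cons_red x u) w = cons_red x (mul_red u w).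
Proof.
case: u => [//|y u] red_u red_w /=; case: eqP => [->|_] //.
by rewrite cons_redK // reduced_mul_red // (reduced_behead red_u).
Qed.

Lemma mul_redA u v w :
  reduced v -> reduced w -> mul_red (mul_red u v) w = mul_red u (mul_red v w).
Proof.
move=> red_v red_w; elim: u => //= x u IHu.
by rewrite mul_red_cons_red ?reduced_mul_red // IHu.
Qed.

Lemma mul_red_cat u v w : mul_red (u ++ v) w = mul_red u (mul_red v w).
Proof. exact: foldr_cat. Qed.

Lemma mul_red_winv u w : reduced w -> mul_red (u ++ winv u) w = w.
Proof.
elim: u w => //= x u IHu w red_w.
rewrite /winv map_cons rev_cons -cats1 catA mul_red_cat IHu ?reduced_cons_red //.
by rewrite /= cons_redK // linvK.
Qed.

Lemma mul_red0 u : reduced u -> mul_red u [::] = u.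
Proof.
elim: u => // x u IHu red_xu; rewrite [mul_red _ _]/= IHu ?(reduced_behead red_xu) //.
by case: u red_xu {IHu} => [//|y u]; rewrite reduced_cons => /andP [/negbTE /= ->].
Qed.

Lemma mul_red_inj w u1 u2 : reduced w -> reduced u1 -> reduced u2 ->
  mul_red u1 w = mul_red u2 w -> u1 = u2.
Proof.
move=> red_w red_u1 red_u2 eq_u12.
have red_winv : reduced (mul_red (winv w) [::]) by apply: reduced_mul_red.
have mul_redK u : reduced u -> mul_red (mul_red u w) (mul_red (winv w) [::]) = u.
  by move=> red_u; rewrite mul_redA // -(mul_red_cat w) mul_red_winv // mul_red0.
by rewrite -(mul_redK u1 red_u1) eq_u12 mul_redK.
Qed.

Lemma size_mul_red u w : size (mul_red u w) <= size u + size w.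
Proof.
elim: u => //= x u IHu; apply: leq_trans (_ : (size (mul_red u w)).+1 <= _) => //.
by case: (mul_red u w) => //= y u'; case: eqP => //= _; apply: leqW.
Qed.

Section Evaluation.
Variables (G : group) (gen : 'I_k -> G).

Lemma piw_cons_red x w : piw gen (cons_red x w) = gmul (gen_val gen x) (piw gen w).
Proof.
case: w => [//|y w] /=; case: eqP => [->|_] //.
rewrite gmulA /gen_val /linv /=; case: (x.2) => /=.
  by rewrite gmulV gmul1.
by rewrite gmulrV gmul1.
Qed.

Lemma piw_mul_red u w : piw gen (mul_red u w) = gmul (piw gen u) (piw gen w).
Proof. by elim: u => /= [|x u IHu]; rewrite ?gmul1 // piw_cons_red IHu gmulA. Qed.
End Evaluation.
End FreeReduction.

(** * Codes of words *)

Lemma divn_digit B d a : d < B -> (d + B * a) %% B = d /\ (d + B * a) %/ B = a.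
Proof.
move=> lt_dB; have B_gt0 : 0 < B by apply: leq_ltn_trans lt_dB.
by rewrite addnC mulnC modnMDl modn_small // divnMDl // divn_small // addn0.
Qed.

Definition digits (B m : nat) : seq nat := [seq m %/ B ^ i %% B | i <- iota 0 m].

(* Digits 2i+1 and 2i+2 code the letters x_i and x_i^-1. *)
Definition invd (d : nat) : nat := if odd d then d.+1 else d.-1.

Definition cons_red_code (B d a : nat) : nat :=
  if (0 < a) && (a %% B == invd d) then a %/ B else d + B * a.

Section Codes.
Variable k : nat.
Local Notation B := (2 * k).+1.
Local Notation word := (seq (letter k)).
Implicit Types (x : letter k) (u w : word).

Definition ldigit x : nat := (letter_code x).+1.

Definition digit_letter (d : nat) : option (letter k) :=
  if d is d'.+1 then omap (fun i : 'I_k => (i, odd d')) (insub d'./2) else None.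

Definition decode (m : nat) : word := pmap digit_letter (digits B m).

Definition mul_red_code u (a : nat) : nat := foldr (cons_red_code B) a (map ldigit u).

Lemma ldigit_gt0 x : 0 < ldigit x. Proof. by []. Qed.

Lemma ldigit_lt x : ldigit x < B.
Proof. by case: x => [[i lt_ik] []]; rewrite /ldigit /letter_code /=; lia. Qed.

Lemma ldigit_inj : injective ldigit.
Proof.
move=> [[i lt_ik] b] [[j lt_jk] c]; rewrite /ldigit /letter_code /= => -[eq_ij].
have [eq_ij' ->] : i = j /\ b = c by case: b c eq_ij => [] [] /=; lia.
by congr pair; apply: val_inj.
Qed.

Lemma invd_ldigit x : invd (ldigit x) = ldigit (linv x).
Proof.
case: x => [[i lt_ik] b]; rewrite /invd /ldigit /letter_code /linv /=.
by case: b; rewrite /= oddD oddM /= ?addn0 ?addn1.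
Qed.

Lemma word_code_cons x w : word_code (x :: w) = ldigit x + B * word_code w.
Proof. by []. Qed.

Lemma code_cons_red x w : word_code (cons_red x w) = cons_red_code B (ldigit x) (word_code w).
Proof.
case: w => [|y w]; first by rewrite /cons_red_code /= muln0.
have [mod_y div_y] := divn_digit (word_code w) (ldigit_lt y).
rewrite word_code_cons /cons_red_code mod_y div_y addn_gt0 ldigit_gt0 invd_ldigit.
by rewrite (inj_eq ldigit_inj) /cons_red; case: ifP.
Qed.

Lemma code_mul_red u w : word_code (mul_red u w) = mul_red_code u (word_code w).
Proof. by elim: u => //= x u IHu; rewrite code_cons_red IHu. Qed.

Lemma digit_letter_ldigit x : digit_letter (ldigit x) = Some x.
Proof.
case: x => [[i lt_ik] b]; rewrite /digit_letter /ldigit /letter_code /=.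
have -> : (2 * i + b)./2 = i by case: b; rewrite /= ?addn0 ?addn1 ?doubleK //; lia.
by rewrite insubT /= oddD oddM /=; case: b.
Qed.

Lemma digit_letterK d x : digit_letter d = Some x -> ldigit x = d.
Proof.
case: d => [//|d] /=; case: insubP => [i _ val_i|//] /= [<-].
by rewrite /ldigit /letter_code /= val_i -[in RHS](odd_double_half d) addnC mul2n.
Qed.

Lemma digit_letter_None d : d \notin iota 1 (2 * k) -> digit_letter d = None.
Proof.
case E: (digit_letter d) => [x|//]; rewrite -(digit_letterK E) mem_iota.
by rewrite ldigit_gt0 add1n ldigit_lt.
Qed.

Lemma size_le_code w : size w <= word_code w.
Proof. by elim: w => //= x w; rewrite /letter_code; lia. Qed.

Lemma nth_digits_code w i : word_code w %/ B ^ i %% B = nth 0 (map ldigit w) i.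
Proof.
elim: w i => [|x w IHw] i; first by rewrite div0n mod0n nth_nil.
have [mod_x div_x] := divn_digit (word_code w) (ldigit_lt x).
case: i => [|i]; first by rewrite expn0 divn1 word_code_cons mod_x.
by rewrite expnS divnMA word_code_cons div_x IHw.
Qed.

(* A word has fewer letters than its code, so [digits] lists all of them, followed by
   zero digits, which decode to nothing. *)
Lemma decodeK : cancel (@word_code k) decode.
Proof.
move=> w; rewrite /decode /digits.
rewrite [iota 0 _](_ : _ = iota 0 (size w) ++ iota (size w) (word_code w - size w)); last first.
  by rewrite -iotaD subnKC ?size_le_code.
rewrite map_cat pmap_cat.
rewrite (eq_map (nth_digits_code w)) -(size_map ldigit) -/(mkseq _ _) mkseq_nth.
set zeros := iota _ _.
have -> : [seq word_code w %/ B ^ i %% B | i <- zeros] = map (fun=> 0) zeros.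
  apply/eq_in_map => i; rewrite mem_iota => /andP [le_wi _].
  by rewrite nth_digits_code nth_default // size_map.
have -> : pmap digit_letter (map (fun=> 0) zeros) = [::] by elim: zeros.
by rewrite cats0 (map_pK digit_letter_ldigit).
Qed.
End Codes.

Section Substitution.
Variables (k k' : nat) (tau : letter k' -> seq (letter k)).
Local Notation B' := (2 * k').+1.

Definition subst_red (w : seq (letter k')) (acc : seq (letter k)) : seq (letter k) :=
  foldr (fun x => mul_red (tau x)) acc w.

Definition subst_digit (d : nat) : seq (letter k) :=
  if digit_letter k' d is Some x then tau x else [::].

Definition subst_code (c a : nat) : nat :=
  foldr (fun d => mul_red_code (subst_digit d)) a (digits B' c).

Lemma reduced_subst_red w acc : reduced acc -> reduced (subst_red w acc).
Proof. by move=> red_acc; elim: w => //= x w; apply: reduced_mul_red. Qed.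

Lemma code_subst_red c acc :
  word_code (subst_red (decode k' c) acc) = subst_code c (word_code acc).
Proof.
rewrite /decode /subst_code; elim: (digits _ _) => //= d ds IHds.
rewrite /subst_digit; case: (digit_letter k' d) => [x|] //=.
by rewrite code_mul_red IHds.
Qed.

Lemma piw_subst_red (G : group) (gen : 'I_k -> G) (gen' : 'I_k' -> G) w acc :
  (forall x, piw gen (tau x) = gen_val gen' x) ->
  piw gen (subst_red w acc) = gmul (piw gen' w) (piw gen acc).
Proof.
move=> tauP; elim: w => /= [|x w IHw]; first by rewrite gmul1.
by rewrite piw_mul_red IHw tauP gmulA.
Qed.
End Substitution.

Lemma subst_red_letter k (u w : seq (letter k)) : subst_red (fun x => [:: x]) u w = mul_red u w.
Proof. by []. Qed.

Lemma eq_iteri_lt n (f f' : nat -> nat -> nat) x :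
  (forall i z, i < n -> f i z = f' i z) -> iteri n f x = iteri n f' x.
Proof.
elim: n => //= n IHn eq_ff'; rewrite eq_ff' // IHn // => i z lt_in.
exact/eq_ff'/ltnW.
Qed.

Lemma foldr_map_iota (g : nat -> nat -> nat) (h : nat -> nat) a n :
  foldr g a [seq h i | i <- iota 0 n] = iteri n (fun j => g (h (n.-1 - j))) a.
Proof.
elim: n h => [//|n IHn] h; rewrite /= subnn; congr (g (h 0)).
rewrite -[iota 1 n]/(iota (1 + 0) n) iotaDl -map_comp IHn.
by apply: eq_iteri_lt => j z lt_jn /=; congr (g (h _)); lia.
Qed.

Definition einvd d := EComp (eif (emod (EVar 0) (ecst 2)) (ESucc (EVar 0)) (epred (EVar 0))) [:: d].

Lemma eval_invd v d : eval (einvd d) v = invd (eval d v).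
Proof.
rewrite eval_comp eval_if eval_mod eval_cst // eval_pred /= modn2 /invd.
by case: odd.
Qed.

Definition econs_red_code B d a := EComp (eif
    (emul (esgn (EVar 1)) (eeqn (emod (EVar 1) (ecst B)) (einvd (EVar 0))))
    (ediv (EVar 1) (ecst B)) (eadd (EVar 0) (emul (ecst B) (EVar 1)))) [:: d; a].

Lemma eval_cons_red_code v B d a : 0 < B ->
  eval (econs_red_code B d a) v = cons_red_code B (eval d v) (eval a v).
Proof.
move=> B_gt0; rewrite eval_comp eval_if eval_mul eval_sgn eval_eqn eval_mod ?eval_cst //.
rewrite eval_invd eval_div ?eval_cst // eval_add eval_mul eval_cst /= /cons_red_code.
by case: (eval a v) => [|a'] /=; rewrite ?mul0n ?mul1n //; case: (a'.+1 %% B == _).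
Qed.

Definition edigit B m i := emod (ediv m (eexp (ecst B) i)) (ecst B).

Lemma eval_digit v B m i : 0 < B ->
  eval (edigit B m i) v = eval m v %/ B ^ eval i v %% B.
Proof.
by move=> B_gt0; rewrite eval_mod ?eval_div ?eval_exp ?eval_cst ?expn_gt0 ?B_gt0.
Qed.

Section SubstExpr.
Variables (k k' : nat) (tau : letter k' -> seq (letter k)).
Local Notation B := (2 * k).+1.
Local Notation B' := (2 * k').+1.

Definition emul_red_code (u : seq (letter k)) (a : expr) : expr :=
  foldr (fun x e => econs_red_code B (ecst (ldigit x)) e) a u.

Lemma eval_mul_red_code v u a : eval (emul_red_code u a) v = mul_red_code u (eval a v).
Proof.
elim: u => [//|x u IHu].
have -> : emul_red_code (x :: u) a = econs_red_code B (ecst (ldigit x)) (emul_red_code u a).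
  by [].
by rewrite eval_cons_red_code // eval_cst IHu.
Qed.

Definition esubst_digit : expr :=
  foldr (fun d e => eif (eeqn (EVar 1) (ecst d)) (emul_red_code (subst_digit tau d) (EVar 0)) e)
    (EVar 0) (iota 1 (2 * k')).

Lemma eval_subst_digit acc d :
  eval esubst_digit [:: acc; d] = mul_red_code (subst_digit tau d) acc.
Proof.
have eval_cases ds : eval (foldr (fun d e => eif (eeqn (EVar 1) (ecst d))
      (emul_red_code (subst_digit tau d) (EVar 0)) e) (EVar 0) ds) [:: acc; d] =
    if d \in ds then mul_red_code (subst_digit tau d) acc else acc.
  elim: ds => [//|d0 ds IHds].
  rewrite [foldr _ _ (_ :: _)]/= eval_if eval_eqn eval_cst IHds in_cons /=.
  by case: (eqVneq d d0) => [->|_] /=; rewrite ?eval_mul_red_code.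
rewrite eval_cases; case: ifP => // /negbT /digit_letter_None.
by rewrite /subst_digit => ->.
Qed.

Definition esubst_code (c a : expr) : expr :=
  EComp (EIter (EVar 0) (EVar 1) (EComp esubst_digit
    [:: EVar 1; edigit B' (EVar 2) (esub (esub (EVar 2) (ecst 1)) (EVar 0))])) [:: c; a].

Lemma eval_subst_code v c a : eval (esubst_code c a) v = subst_code tau (eval c v) (eval a v).
Proof.
rewrite eval_comp eval_iter /subst_code /digits foldr_map_iota.
apply: eq_iteri => j z; rewrite eval_comp eval_subst_digit.
by rewrite eval_digit // !eval_sub eval_cst /= subn1.
Qed.
End SubstExpr.

(** * The decider *)

Lemma peval_comp_mu_inv f q c y : peval (PComp f [:: PMu q; PProj 0]) [:: c] y ->
  exists t, peval q [:: t; c] 0 /\ peval f [:: t; c] y.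
Proof.
move=> ev_fq; inversion ev_fq as [| | |f0 gs v ws y0 ev_args ev_f| | |]; subst.
inversion ev_args as [|g gs0 v0 t ts ev_mu ev_proj]; subst.
inversion ev_proj as [|g1 gs1 v1 c' cs ev_proj0 ev_nil]; subst.
inversion ev_nil; inversion ev_proj0; inversion ev_mu; subst.
by exists t.
Qed.

Section Decider.
Variables (k k' : nat) (tau : letter k' -> seq (letter k)) (p : prog).
Local Notation sing := (fun x : letter k => [:: x]).

(* [run m t c] runs [p] with clock [t] on the codes of [u] and [u w], where [u] is the
   word coded by [m] and [w] the reduced form of [tau] applied to the word coded by [c]. *)
Definition run (m t c : nat) : nat :=
  clocked t p [:: subst_code sing m 0; subst_code sing m (subst_code tau c 0)].

Lemma run_code m t c : run m t c = clocked t p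
  [:: word_code (mul_red (decode k m) [::]);
      word_code (mul_red (decode k m) (subst_red tau (decode k' c) [::]))].
Proof. by rewrite /run -!subst_red_letter !(code_subst_red sing) (code_subst_red tau). Qed.

Definition erun : expr := EComp (clocked_expr 2 p) [:: EVar 1;
  esubst_code sing (EVar 0) EZero; esubst_code sing (EVar 0) (esubst_code tau (EVar 2) EZero)].

Lemma eval_run m t c : eval erun [:: m; t; c] = run m t c.
Proof. by rewrite eval_comp !map_cons !eval_subst_code eval_clocked_expr. Qed.

Definition search_step (t c m s : nat) : nat :=
  if s != 0 then s else if run m t c != 0 then m.+1 else 0.

(* [search t c] is [m.+1] for the least [m < t] such that [run m t c] halts, and [0] if
   there is none. *)
Definition search (t c : nat) : nat := iteri t (search_step t c) 0.

Definition esearch : expr := EIter (EVar 0) EZero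
  (eif (EVar 1) (EVar 1) (eif (EComp erun [:: EVar 0; EVar 2; EVar 3]) (ESucc (EVar 0)) EZero)).

Lemma eval_search t c : eval esearch [:: t; c] = search t c.
Proof. by rewrite eval_iter; apply: eq_iteri => m s; rewrite !eval_if eval_comp eval_run. Qed.

Lemma search_found t c m : search t c = m.+1 -> run m t c != 0.
Proof.
rewrite /search; elim: {1}t => [//|n IHn]; rewrite iteriS {1}/search_step.
by case: ifP => [_ /IHn //|_]; case: ifP => // run_n [<-].
Qed.

Lemma search_neq0 t c m : m < t -> run m t c != 0 -> search t c != 0.
Proof.
rewrite /search; elim: {1 3}t => [//|n IHn]; rewrite ltnS leq_eqVlt iteriS /search_step.
case/predU1P => [-> run_n|/IHn IH /IH]; first by case: ifP => // _; rewrite run_n.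
by case: ifP.
Qed.

Definition eoutput : expr := epred (EComp erun [:: epred esearch; EVar 0; EVar 1]).

Definition decider : prog :=
  PComp (compile 2 eoutput) [:: PMu (compile 2 (eis0 esearch)); PProj 0].

Lemma decider_halts c : (exists t, search t c != 0) -> exists y, peval decider [:: c] y.
Proof.
move=> ex_t; have [t found_t min_t] := ex_minnP ex_t.
exists (eval eoutput [:: t; c]); apply: ev_comp (compile_correct _ _) => //.
apply: evs_cons (evs_cons (ev_proj _) (evs_nil _)) => //.
apply: ev_mu => [|m lt_mt].
  have := compile_correct (eis0 esearch) (v := [:: t; c]) erefl.
  by rewrite eval_is0 eval_search (negbTE found_t).
exists 1; split => //; have := compile_correct (eis0 esearch) (v := [:: m; c]) erefl.
rewrite eval_is0 eval_search; case: eqP => // /eqP /min_t.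
by rewrite leqNgt lt_mt.
Qed.

Lemma decider_sound c y : peval decider [:: c] y -> exists m t, run m t c = y.+1.
Proof.
case/peval_comp_mu_inv => t [ev_test ev_out].
have := peval_fun ev_test (compile_correct (eis0 esearch) (v := [:: t; c]) erefl).
have := peval_fun ev_out (compile_correct eoutput (v := [:: t; c]) erefl).
rewrite eval_is0 eval_search eval_pred eval_comp !map_cons eval_pred eval_search eval_run.
case E: (search t c) => [//|m] -> _; exists m, t.
by move: (search_found E); case: (run m t c).
Qed.
End Decider.

(** * Genericity *)

Section Balls.
Import GRing.Theory Num.Theory.
Variable k : nat.
Local Notation word := (seq (letter k)).
Local Notation B := (2 * k).+1.
Implicit Types (S : pred word) (w : word).

Lemma mem_words_of_len n w : (w \in words_of_len k n) = (size w == n).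
Proof.
elim: n w => [|n IHn] w; first by case: w.
apply/allpairsP/idP => [[[x w'] [_ w'_n ->]] | ]; first by rewrite /= eqSS -IHn.
case: w => [//|x w]; rewrite /= eqSS -IHn => w_n.
by exists (x, w); rewrite mem_enum.
Qed.

Lemma uniq_words_of_len n : uniq (words_of_len k n).
Proof.
elim: n => [//|n IHn] /=; apply: allpairs_uniq => //; first exact: enum_uniq.
by move=> [x1 w1] [x2 w2] _ _ /= [-> ->].
Qed.

Lemma mem_ball n w : (w \in ball k n) = reduced w && (size w <= n).
Proof.
rewrite mem_filter; congr andb; apply/flattenP/idP => [[s /mapP [j]]|le_wn].
  by rewrite mem_iota => /andP [_ lt_jn] -> /[!mem_words_of_len] /eqP ->.
exists (words_of_len k (size w)); last by rewrite mem_words_of_len.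
by apply: map_f; rewrite mem_iota.
Qed.

Lemma uniq_ball n : uniq (ball k n).
Proof.
apply: filter_uniq; elim: n.+1 => [//|m IHm].
rewrite -addn1 iotaD map_cat flatten_cat cat_uniq IHm /= cats0 uniq_words_of_len andbT.
apply/hasPn => w; rewrite mem_words_of_len => /eqP size_w.
apply/flattenP => -[s /mapP [j]]; rewrite mem_iota => /andP [_ lt_jm] ->.
by rewrite mem_words_of_len size_w => /eqP eq_mj; rewrite eq_mj ltnn in lt_jm.
Qed.

Lemma size_ball_gt0 n : 0 < size (ball k n).
Proof.
have : [::] \in ball k n by rewrite mem_ball.
by case: (ball k n).
Qed.

Lemma size_ballS n : size (ball k n.+1) <= B * size (ball k n).
Proof.
have : size (ball k n.+1) <= size ([::] :: [seq x :: w | x <- enum (letter k), w <- ball k n]).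
  apply: uniq_leq_size => [|[//|x w]]; first exact: uniq_ball.
  rewrite mem_ball in_cons => /andP [red_xw le_wn]; apply/allpairsP.
  by exists (x, w); rewrite mem_enum mem_ball (reduced_behead red_xw).
rewrite -cat1s size_cat size_allpairs -cardE card_prod card_ord card_bool.
rewrite [size [:: _]]/=; have := size_ball_gt0 n; nia.
Qed.

Lemma size_ballD n l : size (ball k (n + l)) <= B ^ l * size (ball k n).
Proof.
elim: l => [|l IHl]; first by rewrite addn0 mul1n.
by rewrite addnS expnS -mulnA (leq_trans (size_ballS _)) // leq_mul2l IHl orbT.
Qed.

Lemma count_mul_red S w n : reduced w ->
  count (fun u => ~~ S (mul_red u w)) (ball k n) <= count (predC S) (ball k (n + size w)).
Proof.
move=> red_w; rewrite -!size_filter -(size_map (fun u => mul_red u w)).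
apply: uniq_leq_size => [|uw /mapP [u]].
  rewrite map_inj_in_uniq; first exact/filter_uniq/uniq_ball.
  move=> u1 u2; rewrite !mem_filter => /and3P [_ red_u1 _] /and3P [_ red_u2 _].
  exact: mul_red_inj.
rewrite mem_filter => /andP [notS]; rewrite mem_ball => /andP [red_u le_un] ->.
rewrite mem_filter [predC _ _]/= notS mem_ball reduced_mul_red //=.
by apply: leq_trans (size_mul_red _ _) _; rewrite leq_add2r.
Qed.

Lemma negligible_count (P : pred word) C : negligible P -> 0 < C ->
  exists N, forall n, N <= n -> count P (ball k n) * C < size (ball k n).
Proof.
move=> negP C_gt0; have [|N ltN] := negP (C%:R^-1)%R; first by rewrite invr_gt0 ltr0n.
exists N => n /ltN; rewrite ltr_pdivrMr ?ltr0n ?size_ball_gt0 // ltr_pdivlMl ?ltr0n //.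
by rewrite -natrM ltr_nat mulnC.
Qed.

(* Of the words of length at most N, fewer than half fail [S], and fewer than half are
   mapped outside [S] by the injection [u |-> u w] into the ball of radius N + |w|, which
   is at most B^|w| times larger. *)
Lemma generic_mul_red S w : generic S -> reduced w ->
  exists u, [/\ reduced u, S u & S (mul_red u w)].
Proof.
move=> genS red_w; have C_gt0 : 0 < 2 * B ^ size w by rewrite muln_gt0 expn_gt0.
have [N ltN] := negligible_count genS C_gt0.
have bad_u := ltN N (leqnn N).
have bad_uw : count (fun u => ~~ S (mul_red u w)) (ball k N) * 2 < size (ball k N).
  have := ltN _ (leq_addr (size w) N); have := size_ballD N (size w).
  have := count_mul_red S N red_w; nia.
have /hasP [u] : has (fun u => S u && S (mul_red u w)) (ball k N).
  have := count_predUI (predC S) (fun u => ~~ S (mul_red u w)) (ball k N).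
  have := count_predC (fun u => S u && S (mul_red u w)) (ball k N).
  rewrite has_count (@eq_count _ (predC _) (predU (predC S) (fun u => ~~ S (mul_red u w)))).
    by nia.
  by move=> u; rewrite /= negb_and.
by rewrite mem_ball => /andP [red_u _] /andP [Su Suw]; exists u.
Qed.
End Balls.

Section WordProblem.
Variables (G : group) (k k' : nat) (gen : 'I_k -> G) (gen' : 'I_k' -> G).
Variables (tau : letter k' -> seq (letter k)) (p : prog).
Hypothesis tauP : forall x, piw gen (tau x) = gen_val gen' x.

Lemma decider_total (S : pred (seq (letter k))) : generic S ->
  (forall w1 w2, reduced w1 -> reduced w2 -> S w1 && S w2 ->
     exists y, peval p [:: word_code w1; word_code w2] y) ->
  forall c, exists y, peval (decider tau p) [:: c] y.
Proof.
move=> genS halts_p c; apply: decider_halts.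
set w := subst_red tau (decode k' c) [::].
have red_w : reduced w by apply: reduced_subst_red.
have [u [red_u Su Suw]] := generic_mul_red genS red_w.
have [y /clocked_complete [t Et]] :=
  halts_p _ _ red_u (reduced_mul_red u red_w) (introT andP (conj Su Suw)).
exists (maxn t (word_code u).+1); apply: (search_neq0 (m := word_code u)).
  by rewrite leq_max ltnSn orbT.
by rewrite run_code decodeK mul_red0 // (clocked_mono _ Et) // leq_maxl.
Qed.

Lemma decider_correct :
  (forall w1 w2 y, reduced w1 -> reduced w2 -> peval p [:: word_code w1; word_code w2] y ->
     (y = 1 /\ piw gen w1 = piw gen w2) \/ (y = 0 /\ piw gen w1 <> piw gen w2)) ->
  forall w' y, peval (decider tau p) [:: word_code w'] y ->
    (y = 1 /\ piw gen' w' = gone G) \/ (y = 0 /\ piw gen' w' <> gone G).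
Proof.
move=> correct_p w' y /decider_sound [m [t]]; rewrite run_code decodeK => /clocked_sound.
have red_w : reduced (subst_red tau w' [::]) by apply: reduced_subst_red.
move/(correct_p _ _ _ (reduced_mul_red _ (isT : reduced [::])) (reduced_mul_red _ red_w)).
rewrite !piw_mul_red (piw_subst_red _ _ tauP) /= !gmulr1.
case=> -[-> eq_u]; [left | right]; first by rewrite (gmul_fixr (esym eq_u)).
by split => // eq1; apply: eq_u; rewrite eq1 gmulr1.
Qed.
End WordProblem.

Theorem theoremA (G : group) :
  (exists (k : nat) (gen : 'I_k -> G), generating gen /\
     exists S : pred (seq (letter k)),
       generic S /\ EqP_solvable_on gen (fun w1 w2 => S w1 && S w2)) ->
  forall (k : nat) (gen : 'I_k -> G), generating gen -> WP_solvable gen.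
Proof.
move=> [k [gen [[_ gen_onto] [S [genS [p [halts_p correct_p]]]]]]] k' gen' _.
have [tau tauP] := functional_choice (fun x w => piw gen w = gen_val gen' x)
  (fun x => gen_onto (gen_val gen' x)).
exists (decider tau p); split => [w' _ _ | w' y _].
  exact: decider_total genS halts_p (word_code w').
exact: decider_correct tauP correct_p w' y.
Qed.
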